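(* Let $f:\mathbb{E}\to\mathbb{R}\cup\{+\infty\}$ be a proper extended real function which is invex in terms of the lower Hadamard directional derivative. Then $f$ is second-order invex.
   Context: $\mathbb{E}$ is a real finite-dimensional Euclidean space; $\operatorname{dom} f=\{x:f(x)<+\infty\}$. For $x\in\operatorname{dom} f$: $f^{(1)}_-(x;u)=\liminf_{t\downarrow 0,\,u'\to u} t^{-1}[f(x+tu')-f(x)]$; $\partial^{(1)}_- f(x)=\{x^*\in L^1(\mathbb{E}) : x^*(u)\le f^{(1)}_-(x;u)\ \forall u\}$; when $0\in\partial^{(1)}_- f(x)$, $f^{(2)}_-(x;0;u)=\liminf_{t\downarrow 0,\,u'\to u} 2t^{-2}[f(x+tu')-f(x)]$. Arithmetic in $[-\infty,+\infty]$ with a fixed convention for $(+\infty)+(-\infty)$. $f$ is invex in terms of the lower Hadamard directional derivative iff there is a map $\eta:\mathbb{E}\times\mathbb{E}\to\mathbb{E}$ with $f(y)-f(x)\ge f^{(1)}_-(x;\eta(x,y))$ for all $x\in\operatorname{dom} f$, $y\in\mathbb{E}$. $f$ is second-order invex iff for every $\bar x\in\operatorname{dom} f$ with $0\in\partial^{(1)}_- f(\bar x)$ and every $x\in\mathbb{E}$ there exist $\eta_1,\eta_2\in\mathbb{E}$ with $f(x)-f(\bar x)\ge f^{(1)}_-(\bar x;\eta_1)+f^{(2)}_-(\bar x;0;\eta_2)$. *)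

From Stdlib Require Import Reals ClassicalEpsilon.
From Stdlib Require Vectors.Fin.
Open Scope R_scope.

Inductive ER : Type := ERfin (r : R) | ERpinf | ERninf.

Definition ER_le (a b : ER) : Prop :=
  match a, b with
  | ERninf, _ => True
  | _, ERpinf => True
  | ERfin x, ERfin y => x <= y
  | _, _ => False
  end.

(** Addition on [-oo,+oo]; [c] is the fixed value of (+oo)+(-oo) = (-oo)+(+oo). *)
Definition ER_add (c : ER) (a b : ER) : ER :=
  match a, b with
  | ERfin x, ERfin y => ERfin (x + y)
  | ERpinf, ERninf => c
  | ERninf, ERpinf => c
  | ERpinf, _ => ERpinf
  | _, ERpinf => ERpinf
  | ERninf, _ => ERninf
  | _, ERninf => ERninf
  end.

Definition ER_subr (a : ER) (r : R) : ER :=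
  match a with ERfin x => ERfin (x - r) | e => e end.

(** k * a, used only for k > 0 *)
Definition ER_scal (k : R) (a : ER) : ER :=
  match a with ERfin x => ERfin (k * x) | e => e end.

(** real value of a finite extended real (used only at points of dom f) *)
Definition real_of (a : ER) : R := match a with ERfin x => x | _ => 0 end.

Definition is_glb (P : ER -> Prop) (l : ER) : Prop :=
  (forall y, P y -> ER_le l y) /\ (forall z, (forall y, P y -> ER_le z y) -> ER_le z l).
Definition is_lub (P : ER -> Prop) (l : ER) : Prop :=
  (forall y, P y -> ER_le y l) /\ (forall z, (forall y, P y -> ER_le y z) -> ER_le l z).
Definition ER_inf (P : ER -> Prop) : ER := epsilon (inhabits ERpinf) (is_glb P).
Definition ER_sup (P : ER -> Prop) : ER := epsilon (inhabits ERninf) (is_lub P).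

Definition E (n : nat) : Type := Fin.t n -> R.

Fixpoint fsum (n : nat) : (Fin.t n -> R) -> R :=
  match n return (Fin.t n -> R) -> R with
  | O => fun _ => 0
  | S m => fun g => g (@Fin.F1 m) + fsum m (fun i => g (Fin.FS i))
  end.

Definition vadd {n} (x y : E n) : E n := fun i => x i + y i.
Definition vscal {n} (a : R) (x : E n) : E n := fun i => a * x i.
Definition vsub {n} (x y : E n) : E n := fun i => x i - y i.
Definition enorm {n} (x : E n) : R := sqrt (fsum n (fun i => x i ^ 2)).

Definition in_dom {n} (f : E n -> ER) (x : E n) : Prop := exists r, f x = ERfin r.
Definition proper {n} (f : E n -> ER) : Prop :=
  (exists x, in_dom f x) /\ (forall x, f x <> ERninf).

(** liminf_{t↓0, u'→u} Q t u' = sup_{d>0} inf {Q t u' | 0<t<d, |u'-u|<d} *)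
Definition liminf_tu {n} (Q : R -> E n -> ER) (u : E n) : ER :=
  ER_sup (fun s => exists d, 0 < d /\
    s = ER_inf (fun q => exists t u', 0 < t < d /\ enorm (vsub u' u) < d /\ q = Q t u')).

Definition lhdd {n} (f : E n -> ER) (x u : E n) : ER :=
  liminf_tu (fun t u' => ER_scal (/ t) (ER_subr (f (vadd x (vscal t u'))) (real_of (f x)))) u.

Definition lhdd2 {n} (f : E n -> ER) (x u : E n) : ER :=
  liminf_tu (fun t u' => ER_scal (2 / t ^ 2) (ER_subr (f (vadd x (vscal t u'))) (real_of (f x)))) u.

Definition is_linear {n} (L : E n -> R) : Prop :=
  forall x y a b, L (vadd (vscal a x) (vscal b y)) = a * L x + b * L y.
Definition subdiff {n} (f : E n -> ER) (x : E n) (L : E n -> R) : Prop :=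
  is_linear L /\ forall u, ER_le (ERfin (L u)) (lhdd f x u).

Definition invex_lhdd {n} (f : E n -> ER) : Prop :=
  exists eta : E n -> E n -> E n, forall x y, in_dom f x ->
    ER_le (lhdd f x (eta x y)) (ER_subr (f y) (real_of (f x))).

Definition second_order_invex {n} (c : ER) (f : E n -> ER) : Prop :=
  forall xb, in_dom f xb -> subdiff f xb (fun _ => 0) ->
  forall x, exists eta1 eta2 : E n,
    ER_le (ER_add c (lhdd f xb eta1) (lhdd2 f xb eta2)) (ER_subr (f x) (real_of (f xb))).

(** Take [eta1 := eta xb x] and [eta2 := 0].  Along the direction [0] the
    second-order quotient is identically [0], so [lhdd2 f xb 0 <= 0], and adding
    a non-positive quantity to [lhdd f xb (eta xb x) <= f x - f xb] keeps the
    inequality, whatever value is chosen for [(+oo) + (-oo)]. *)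

From Pilot Require Import Defs.
From Stdlib Require Import Reals Lra Classical ClassicalEpsilon FunctionalExtensionality.
Open Scope R_scope.

Lemma ER_lub_exists (P : ER -> Prop) : exists l, Defs.is_lub P l.
Proof.
  destruct (classic (P ERpinf)) as [HPpinf|HPpinf].
  { exists ERpinf; split; [now intros [] _ | intros z Hz; now apply Hz]. }
  destruct (classic (exists r, P (ERfin r))) as [[r0 Hr0]|Hnofin].
  - destruct (classic (exists M, forall r, P (ERfin r) -> r <= M)) as [[M HM]|Hunb].
    + destruct (completeness (fun r => P (ERfin r))) as [m [Hub Hleast]];
        [now exists M | now exists r0 |].
      exists (ERfin m); split.
      * intros [y| |] Hy; simpl; [now apply Hub | contradiction | exact I].
      * intros [w| |] Hz; simpl; auto; [|exact (Hz _ Hr0)].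
        apply Hleast; intros r Hr; exact (Hz _ Hr).
    + exists ERpinf; split; [now intros [] _ |].
      intros [w| |] Hz; simpl; auto; [|exact (Hz _ Hr0)].
      apply Hunb; exists w; intros r Hr; exact (Hz _ Hr).
  - exists ERninf; split; [|now intros].
    intros [y| |] Hy; simpl; auto; apply Hnofin; eauto.
Qed.

Lemma ER_glb_exists (P : ER -> Prop) : exists l, Defs.is_glb P l.
Proof.
  destruct (classic (P ERninf)) as [HPninf|HPninf].
  { exists ERninf; split; [now intros | intros z Hz; now apply Hz]. }
  destruct (classic (exists r, P (ERfin r))) as [[r0 Hr0]|Hnofin].
  - destruct (classic (exists M, forall r, P (ERfin r) -> M <= r)) as [[M HM]|Hunb].
    + destruct (completeness (fun r => P (ERfin (- r)))) as [m [Hub Hleast]].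
      { exists (- M); intros r Hr; specialize (HM _ Hr); lra. }
      { exists (- r0); now rewrite Ropp_involutive. }
      exists (ERfin (- m)); split.
      * intros [y| |] Hy; simpl; [|exact I|contradiction].
        enough (- y <= m) by lra.
        apply Hub; now rewrite Ropp_involutive.
      * intros [w| |] Hz; simpl; auto; [|exact (Hz _ Hr0)].
        enough (m <= - w) by lra.
        apply Hleast; intros r Hr; specialize (Hz _ Hr); simpl in Hz; lra.
    + exists ERninf; split; [now intros |].
      intros [w| |] Hz; simpl; auto; [|exact (Hz _ Hr0)].
      apply Hunb; exists w; intros r Hr; exact (Hz _ Hr).
  - exists ERpinf; split; [|now intros [] _].
    intros [y| |] Hy; simpl; auto; apply Hnofin; eauto.
Qed.

Lemma ER_sup_lub (P : ER -> Prop) : Defs.is_lub P (ER_sup P).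
Proof. unfold ER_sup; apply epsilon_spec, ER_lub_exists. Qed.

Lemma ER_inf_glb (P : ER -> Prop) : Defs.is_glb P (ER_inf P).
Proof. unfold ER_inf; apply epsilon_spec, ER_glb_exists. Qed.

Lemma fsum_eq0 n (g : Fin.t n -> R) : (forall i, g i = 0) -> fsum n g = 0.
Proof.
  induction n as [|n IHn]; simpl; intros Hg; [reflexivity|].
  rewrite Hg, IHn; [ring | auto].
Qed.

Lemma enorm_vsub_diag n (u : E n) : enorm (vsub u u) = 0.
Proof.
  unfold enorm; rewrite fsum_eq0; [apply sqrt_0|].
  intros i; unfold vsub; ring.
Qed.

Lemma ER_le_trans (a b c : ER) : ER_le a b -> ER_le b c -> ER_le a c.
Proof. destruct a, b, c; simpl; intros; auto; try lra; contradiction. Qed.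

Lemma liminf_tu_le n (Q : R -> E n -> ER) (u : E n) (a : ER) :
  (forall d, 0 < d -> exists t, 0 < t < d /\ ER_le (Q t u) a) ->
  ER_le (liminf_tu Q u) a.
Proof.
  intros Hfreq; apply ER_sup_lub; intros s [d [Hd ->]].
  destruct (Hfreq d Hd) as [t [Ht HQa]].
  apply ER_le_trans with (Q t u); [|exact HQa].
  apply ER_inf_glb; exists t, u; rewrite enorm_vsub_diag; auto.
Qed.

Lemma lhdd2_dir0_le0 n (f : E n -> ER) (xb : E n) :
  in_dom f xb -> ER_le (lhdd2 f xb (fun _ => 0)) (ERfin 0).
Proof.
  intros [r Hr]; apply liminf_tu_le; intros d Hd.
  exists (d / 2); split; [lra|].
  replace (vadd xb (vscal (d / 2) (fun _ => 0))) with xb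
    by (apply functional_extensionality; intros i; unfold vadd, vscal; ring).
  rewrite Hr; simpl; lra.
Qed.

Lemma ER_add_le_nonpos (c a b y : ER) :
  ER_le a y -> ER_le b (ERfin 0) -> ER_le (ER_add c a b) y.
Proof. destruct a, b, y, c; simpl; intros; auto; try lra; contradiction. Qed.

Theorem mainTheorem5 (n : nat) (c : ER) (f : E n -> ER) :
  proper f -> invex_lhdd f -> second_order_invex c f.
Proof.
  intros _ [eta Heta] xb Hxb _ x.
  exists (eta xb x), (fun _ => 0).
  apply ER_add_le_nonpos; [now apply Heta | now apply lhdd2_dir0_le0].
Qed.
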